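(* $(U_0,\alpha_N\colon N\otimes U_0\to U_0)$ is a corecursive algebra for the functor $N\otimes-$ on $\mathsf{SquaSet}$.
   Context: Let $M_0=\{(r,s)\in[0,1]^2: r\in\{0,1\}\text{ or } s\in\{0,1\}\}$. A square set is a pair $(X,S_X)$ with $X$ a set and $S_X\colon M_0\to X$ injective; $\mathsf{SquaSet}$ has square sets as objects and maps $f$ with $f\circ S_X=S_Y$ as morphisms. Let $N=\{0,1,2\}^2$, also viewed as points of $\mathbb{R}^2$. For a square set $X$, $N\otimes X=(N\times X)/\!\sim$, where $\sim$ is the equivalence relation generated by $(m,S_X(p))\sim(n,S_X(q))$ whenever $m,n\in N$ differ by exactly $1$ in exactly one coordinate and $(m+p)/3=(n+q)/3$; $n\otimes x$ is the class of $(n,x)$; $S_{N\otimes X}(p)=n\otimes S_X(3p-n)$ for any $n\in N$ with $p\in(n+[0,1]^2)/3$; $(N\otimes f)(n\otimes x)=n\otimes f(x)$. $U_0=[0,1]^2$ with $S_{U_0}$ the inclusion, and $\alpha_N(n\otimes z)=\frac13(n+z)$. An algebra $(A,a\colon FA\to A)$ is corecursive if for every coalgebra $e\colon X\to FX$ there is a unique morphism $e^\dagger\colon X\to A$ with $e^\dagger=a\circ Fe^\dagger\circ e$. *)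

From Stdlib Require Import Reals Lra ClassicalEpsilon Relations.
Open Scope R_scope.

Definition inI (x : R) : Prop := 0 <= x <= 1.
Definition inSq (p : R * R) : Prop := inI (fst p) /\ inI (snd p).
Definition inM0 (p : R * R) : Prop :=
  inSq p /\ (fst p = 0 \/ fst p = 1 \/ snd p = 0 \/ snd p = 1).
Definition M0 : Type := {p : R * R | inM0 p}.

(* A "pre-square set": a set X with a map S_X : M_0 -> X.  A square set is one
   whose S_X is injective (predicate [is_squaset]). *)
Record PSq := { car :> Type; sq : M0 -> car }.
Definition is_squaset (X : PSq) : Prop := forall p q, sq X p = sq X q -> p = q.

Record Hom (X Y : PSq) := { hom :> car X -> car Y;
                            hom_sq : forall p, hom (sq X p) = sq Y p }.

Inductive t3 := T0 | T1 | T2.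
Definition t3R (a : t3) : R := match a with T0 => 0 | T1 => 1 | T2 => 2 end.
Definition Nidx : Type := (t3 * t3)%type.

Definition adjacent (m n : Nidx) : Prop :=
  (fst m = fst n /\ Rabs (t3R (snd m) - t3R (snd n)) = 1) \/
  (snd m = snd n /\ Rabs (t3R (fst m) - t3R (fst n)) = 1).

Definition cell_pt (n : Nidx) (p : R * R) : R * R :=
  ((t3R (fst n) + fst p) / 3, (t3R (snd n) + snd p) / 3).

Definition gen (X : PSq) (a b : Nidx * car X) : Prop :=
  exists (m n : Nidx) (p q : M0),
    a = (m, sq X p) /\ b = (n, sq X q) /\ adjacent m n /\
    cell_pt m (proj1_sig p) = cell_pt n (proj1_sig q).

Definition tensor_eqv (X : PSq) : Nidx * car X -> Nidx * car X -> Prop :=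
  clos_refl_sym_trans _ (gen X).

Definition tcls (X : PSq) (a : Nidx * car X) : Nidx * car X -> Prop :=
  tensor_eqv X a.
Definition TCar (X : PSq) : Type :=
  {C : Nidx * car X -> Prop | exists a, C = tcls X a}.
Definition tclass (X : PSq) (a : Nidx * car X) : TCar X :=
  exist _ (tcls X a) (ex_intro _ a eq_refl).
Definition trepr (X : PSq) (c : TCar X) : Nidx * car X :=
  proj1_sig (constructive_indefinite_description _ (proj2_sig c)).

(* canonical cell index n with p in (n + [0,1]^2)/3 *)
Definition cellc (x : R) : t3 :=
  if Rlt_dec (3 * x) 1 then T0 else if Rlt_dec (3 * x) 2 then T1 else T2.
Definition cellof (p : R * R) : Nidx := (cellc (fst p), cellc (snd p)).
Definition resc (n : Nidx) (p : R * R) : R * R :=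
  (3 * fst p - t3R (fst n), 3 * snd p - t3R (snd n)).

Lemma cellc_bounds (x : R) : inI x ->
  inI (3 * x - t3R (cellc x)) /\
  (x = 0 -> 3 * x - t3R (cellc x) = 0) /\ (x = 1 -> 3 * x - t3R (cellc x) = 1).
Proof.
  unfold inI, cellc; intros H.
  destruct (Rlt_dec (3 * x) 1); [|destruct (Rlt_dec (3 * x) 2)]; simpl;
    repeat split; intros; lra.
Qed.

Lemma resc_M0 (p : M0) : inM0 (resc (cellof (proj1_sig p)) (proj1_sig p)).
Proof.
  destruct p as [[x y] [[Hx Hy] Hb]]; simpl.
  destruct (cellc_bounds x Hx) as [A [B C]].
  destruct (cellc_bounds y Hy) as [D [E F]].
  unfold inM0, inSq, resc, cellof; simpl.
  split; [split; assumption|].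
  destruct Hb as [H|[H|[H|H]]]; simpl in H; auto.
Qed.

Definition tsq (X : PSq) (p : M0) : TCar X :=
  tclass X (cellof (proj1_sig p),
            sq X (exist _ (resc (cellof (proj1_sig p)) (proj1_sig p)) (resc_M0 p))).
Definition NT (X : PSq) : PSq := {| car := TCar X; sq := tsq X |}.

Definition Nmap {X Y : PSq} (f : car X -> car Y) (c : car (NT X)) : car (NT Y) :=
  let r := trepr X c in tclass Y (fst r, f (snd r)).

Definition U0 : PSq :=
  {| car := {p : R * R | inSq p};
     sq := fun p => exist _ (proj1_sig p) (proj1 (proj2_sig p)) |}.

Lemma cell_pt_sq (n : Nidx) (z : R * R) : inSq z -> inSq (cell_pt n z).
Proof.
  destruct n as [a b]; destruct z as [x y]; unfold inSq, inI, cell_pt; simpl.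
  destruct a, b; simpl; lra.
Qed.

Definition alphaN (c : car (NT U0)) : car U0 :=
  let r := trepr U0 c in
  exist _ (cell_pt (fst r) (proj1_sig (snd r))) (cell_pt_sq _ _ (proj2_sig (snd r))).

From Stdlib Require Import Reals Lra Lia ClassicalEpsilon Relations ProofIrrelevance.
Open Scope R_scope.

(* A coalgebra e reads off, through a representative of e x, a cell c x in N
   and a successor g x.  An algebra morphism h into U_0 must satisfy
   h x = (c x + h (g x)) / 3, so both coordinates of h x are the ternary
   expansions whose digits are the cells met along the orbit of x under g; this
   determines h, and conversely the points with these expansions give a
   solution.  That solution respects S_X because, X being a square set, the
   relation ~ preserves the boundary point (n + q)/3 represented by
   n (x) S_X q, so the orbit of S_X p traces the ternary expansion of p. *)

Definition shift {A : Type} (a : nat -> A) : nat -> A := fun i => a (S i).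

Fixpoint tpartial (a : nat -> R) (k : nat) : R :=
  match k with O => 0 | S k => (a O + tpartial (shift a) k) / 3 end.

Definition ternary_digits (a : nat -> R) : Prop := forall i, 0 <= a i <= 2.

Definition ternary_expansion (a : nat -> R) (v : R) : Prop :=
  forall k, tpartial a k <= v <= tpartial a k + / 3 ^ k.

Lemma Rinv_pow3_S k : / 3 ^ S k = / 3 * / 3 ^ k.
Proof. simpl. apply Rinv_mult. Qed.

Lemma Rinv_pow3_gt0 k : 0 < / 3 ^ k.
Proof. apply Rinv_0_lt_compat, pow_lt. lra. Qed.

Lemma ternary_digits_shift a : ternary_digits a -> ternary_digits (shift a).
Proof. intros Ha i. apply Ha. Qed.

Lemma tpartial_bounds a k : ternary_digits a -> 0 <= tpartial a k <= 1.
Proof.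
  revert a; induction k as [|k IHk]; intros a Ha; simpl; [lra|].
  pose proof (IHk _ (ternary_digits_shift a Ha)). specialize (Ha O). lra.
Qed.

Lemma tpartial_add a k m :
  ternary_digits a -> tpartial a k <= tpartial a (k + m) <= tpartial a k + / 3 ^ k.
Proof.
  revert a; induction k as [|k IHk]; intros a Ha.
  - simpl. rewrite Rinv_1. pose proof (tpartial_bounds a m Ha). lra.
  - rewrite Rinv_pow3_S. simpl.
    pose proof (IHk _ (ternary_digits_shift a Ha)). pose proof (Rinv_pow3_gt0 k). lra.
Qed.

Lemma eq0_of_le_Rinv_pow3 d : (forall k, Rabs d <= / 3 ^ k) -> d = 0.
Proof.
  intros Hd. destruct (Req_dec d 0) as [|Hneq]; [assumption|].
  destruct (pow_lt_1_zero (/ 3) ltac:(rewrite Rabs_pos_eq; lra) (Rabs d)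
              (Rabs_pos_lt d Hneq)) as [N HN].
  specialize (HN N (le_n N)). specialize (Hd N).
  rewrite pow_inv, Rabs_pos_eq in HN by (left; apply Rinv_pow3_gt0). lra.
Qed.

Lemma ternary_expansion_unique a v w :
  ternary_expansion a v -> ternary_expansion a w -> v = w.
Proof.
  intros Hv Hw. apply Rminus_diag_uniq, eq0_of_le_Rinv_pow3. intros k.
  specialize (Hv k); specialize (Hw k). apply Rabs_le. lra.
Qed.

Lemma ternary_expansion_exists a : ternary_digits a -> exists v, ternary_expansion a v.
Proof.
  intros Ha.
  set (E := fun x => exists k, x = tpartial a k).
  destruct (completeness E) as [v [Hub Hlub]].
  - exists 1. intros x [k ->]. apply tpartial_bounds, Ha.
  - exists 0, O. reflexivity.
  - exists v. intros k. split.
    + apply Hub. exists k. reflexivity.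
    + apply Hlub. intros x [j ->].
      destruct (Nat.le_gt_cases j k) as [Hjk|Hkj].
      * replace k with (j + (k - j))%nat by lia.
        pose proof (tpartial_add a j (k - j) Ha).
        pose proof (Rinv_pow3_gt0 (j + (k - j))). lra.
      * replace j with (k + (j - k))%nat by lia. apply tpartial_add, Ha.
Qed.

Definition tvalue (a : nat -> R) : R := epsilon (inhabits 0) (ternary_expansion a).

Lemma tvalue_expansion a : ternary_digits a -> ternary_expansion a (tvalue a).
Proof. intros Ha. unfold tvalue. apply epsilon_spec, ternary_expansion_exists, Ha. Qed.

Lemma tvalue_bounds a : ternary_digits a -> 0 <= tvalue a <= 1.
Proof.
  intros Ha. pose proof (tvalue_expansion a Ha O) as H0.
  simpl in H0. rewrite Rinv_1 in H0. lra.
Qed.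

Lemma tvalue_shift a : ternary_digits a -> tvalue a = (a O + tvalue (shift a)) / 3.
Proof.
  intros Ha. apply (ternary_expansion_unique a); [apply tvalue_expansion, Ha|].
  pose proof (tvalue_expansion _ (ternary_digits_shift a Ha)) as Hs.
  pose proof (tvalue_bounds _ (ternary_digits_shift a Ha)).
  intros [|k].
  - simpl. rewrite Rinv_1. specialize (Ha O). lra.
  - rewrite Rinv_pow3_S. simpl. specialize (Hs k). lra.
Qed.

Lemma ternary_expansion_coind (Sol : (nat -> R) -> R -> Prop) :
  (forall a v, Sol a v ->
     0 <= v <= 1 /\ exists v', Sol (shift a) v' /\ v = (a O + v') / 3) ->
  forall a v, Sol a v -> ternary_expansion a v.
Proof.
  intros HSol a v Hav k. revert a v Hav.
  induction k as [|k IHk]; intros a v Hav;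
    destruct (HSol a v Hav) as [Hv [v' [Hv' ->]]].
  - simpl. rewrite Rinv_1. lra.
  - rewrite Rinv_pow3_S. simpl. specialize (IHk _ _ Hv'). lra.
Qed.

Definition address_point (a : nat -> Nidx) : R * R :=
  (tvalue (fun i => t3R (fst (a i))), tvalue (fun i => t3R (snd (a i)))).

Lemma t3R_digits (a : nat -> t3) : ternary_digits (fun i => t3R (a i)).
Proof. intros i. destruct (a i); simpl; lra. Qed.

Lemma address_point_inSq a : inSq (address_point a).
Proof. split; apply tvalue_bounds, t3R_digits. Qed.

Lemma address_point_shift a : address_point a = cell_pt (a O) (address_point (shift a)).
Proof.
  unfold address_point, cell_pt. simpl.
  rewrite (tvalue_shift (fun i => t3R (fst (a i)))), (tvalue_shift (fun i => t3R (snd (a i))))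
    by apply t3R_digits.
  reflexivity.
Qed.

Definition cell_consistent (Sol : (nat -> Nidx) -> R * R -> Prop) : Prop :=
  forall a p, Sol a p -> inSq p /\ exists p', Sol (shift a) p' /\ p = cell_pt (a O) p'.

Lemma coord_expansion (pr : R * R -> R) (dg : Nidx -> R)
    (pr_cell : forall n p, pr (cell_pt n p) = (dg n + pr p) / 3)
    (pr_bounds : forall p, inSq p -> 0 <= pr p <= 1)
    (Sol : (nat -> Nidx) -> R * R -> Prop) (HSol : cell_consistent Sol) a p :
  Sol a p -> ternary_expansion (fun i => dg (a i)) (pr p).
Proof.
  intros Hap.
  apply (ternary_expansion_coind
           (fun b v => exists a p, Sol a p /\ b = (fun i => dg (a i)) /\ v = pr p));
    [|eauto].
  intros b v (a' & p' & Hap' & -> & ->).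
  destruct (HSol a' p' Hap') as [Hp' [p'' [Hp'' ->]]].
  split; [apply pr_bounds, cell_pt_sq, (proj1 (HSol _ _ Hp''))|].
  exists (pr p''). split; [exists (shift a'), p''; auto | apply pr_cell].
Qed.

Lemma address_point_unique Sol : cell_consistent Sol ->
  forall a p, Sol a p -> p = address_point a.
Proof.
  intros HSol a [x y] Hap. unfold address_point. f_equal.
  - apply (ternary_expansion_unique (fun i => t3R (fst (a i))));
      [|apply tvalue_expansion, t3R_digits].
    apply (coord_expansion fst (fun n => t3R (fst n))) with (Sol := Sol) (p := (x, y));
      auto; intros p [Hp _]; exact Hp.
  - apply (ternary_expansion_unique (fun i => t3R (snd (a i))));
      [|apply tvalue_expansion, t3R_digits].
    apply (coord_expansion snd (fun n => t3R (snd n))) with (Sol := Sol) (p := (x, y));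
      auto; intros p [_ Hp]; exact Hp.
Qed.

Lemma U0_ext (u v : car U0) : proj1_sig u = proj1_sig v -> u = v.
Proof.
  destruct u as [u Hu], v as [v Hv]; simpl; intros ->.
  f_equal. apply proof_irrelevance.
Qed.

Lemma tensor_eqv_iff (X : PSq) (P : Nidx * car X -> Prop) :
  (forall a b, gen X a b -> (P a <-> P b)) ->
  forall a b, tensor_eqv X a b -> (P a <-> P b).
Proof. intros HP a b H. induction H; [auto | tauto | tauto | tauto]. Qed.

Lemma tensor_eqv_trepr (X : PSq) a : tensor_eqv X a (trepr X (tclass X a)).
Proof.
  unfold trepr. destruct (constructive_indefinite_description _ _) as [r Hr].
  simpl in Hr |- *. change (tcls X a r). rewrite Hr. apply rst_refl.
Qed.

Lemma tensor_eqv_U0_cell_pt a b : tensor_eqv U0 a b ->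
  cell_pt (fst a) (proj1_sig (snd a)) = cell_pt (fst b) (proj1_sig (snd b)).
Proof.
  intros Hab.
  apply (tensor_eqv_iff U0
           (fun c => cell_pt (fst c) (proj1_sig (snd c)) = cell_pt (fst b) (proj1_sig (snd b))))
    with (b := b); [|exact Hab|reflexivity].
  intros c d (m & n & p & q & -> & -> & _ & Heq). simpl. rewrite Heq. tauto.
Qed.

Lemma alphaN_tclass n w : proj1_sig (alphaN (tclass U0 (n, w))) = cell_pt n (proj1_sig w).
Proof. symmetry. apply (tensor_eqv_U0_cell_pt (n, w)), tensor_eqv_trepr. Qed.

Definition boundary_rep (X : PSq) (p0 : R * R) (a : Nidx * car X) : Prop :=
  exists q, snd a = sq X q /\ cell_pt (fst a) (proj1_sig q) = p0.

Lemma tensor_eqv_boundary_rep (X : PSq) (HX : is_squaset X) p0 a b :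
  tensor_eqv X a b -> (boundary_rep X p0 a <-> boundary_rep X p0 b).
Proof.
  apply tensor_eqv_iff. intros c d (m & n & p & q & -> & -> & _ & Heq).
  unfold boundary_rep; simpl. split; intros [r [Hr Hcell]]; apply HX in Hr; subst r.
  - exists q. split; congruence.
  - exists p. split; congruence.
Qed.

Lemma cell_pt_resc p : cell_pt (cellof p) (resc (cellof p) p) = p.
Proof. destruct p as [x y]. unfold cell_pt, resc. simpl. f_equal; field. Qed.

Section Coalgebra.

Variables (X : PSq) (e : Hom X (NT X)).

(* [Nmap] acts through the same representative [trepr], so these are exactly the
   data the equation of an algebra morphism sees. *)
Definition cell_of_state (x : car X) : Nidx := fst (trepr X (e x)).
Definition next_state (x : car X) : car X := snd (trepr X (e x)).

Fixpoint orbit (n : nat) (x : car X) : car X :=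
  match n with O => x | S n => orbit n (next_state x) end.

Definition address (x : car X) : nat -> Nidx := fun i => cell_of_state (orbit i x).

Lemma solution_step (f : car X -> car U0) x : f x = alphaN (Nmap f (e x)) ->
  proj1_sig (f x) = cell_pt (cell_of_state x) (proj1_sig (f (next_state x))).
Proof. intros Hf. rewrite Hf. apply alphaN_tclass. Qed.

Lemma solution_address (f : car X -> car U0) :
  (forall x, f x = alphaN (Nmap f (e x))) ->
  forall x, proj1_sig (f x) = address_point (address x).
Proof.
  intros Hf x.
  apply (address_point_unique (fun a p => exists x, a = address x /\ p = proj1_sig (f x))).
  - intros a p (y & -> & ->). split; [apply (proj2_sig (f y))|].
    exists (proj1_sig (f (next_state y))). split.
    + exists (next_state y). auto.
    + apply solution_step, Hf.
  - exists x. auto.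
Qed.

Definition address_map (x : car X) : car U0 :=
  exist _ (address_point (address x)) (address_point_inSq (address x)).

Lemma address_map_solution x : address_map x = alphaN (Nmap address_map (e x)).
Proof.
  apply U0_ext. unfold Nmap. rewrite alphaN_tclass. apply address_point_shift.
Qed.

Hypothesis HX : is_squaset X.

Lemma next_state_sq p : exists q,
  next_state (sq X p) = sq X q /\ cell_pt (cell_of_state (sq X p)) (proj1_sig q) = proj1_sig p.
Proof.
  unfold next_state, cell_of_state. rewrite (hom_sq _ _ e p).
  change (boundary_rep X (proj1_sig p) (trepr X (tsq X p))).
  apply (tensor_eqv_boundary_rep X HX _ _ _ (tensor_eqv_trepr X (cellof (proj1_sig p), _))).
  eexists. split; [reflexivity | apply cell_pt_resc].
Qed.

Lemma address_map_sq p : address_map (sq X p) = sq U0 p.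
Proof.
  apply U0_ext. symmetry.
  apply (address_point_unique (fun a p => exists q, a = address (sq X q) /\ p = proj1_sig q)).
  - intros a p' (q & -> & ->). split; [apply (proj2_sig q)|].
    destruct (next_state_sq q) as [q' [Hnext Hcell]].
    exists (proj1_sig q'). split; [|symmetry; exact Hcell].
    exists q'. split; [|reflexivity].
    change (address (next_state (sq X q)) = address (sq X q')). rewrite Hnext. reflexivity.
  - exists p. auto.
Qed.

End Coalgebra.

Theorem mainTheorem7 :
  forall (X : PSq), is_squaset X ->
  forall e : Hom X (NT X),
    exists h : Hom X U0,
      (forall x, h x = alphaN (Nmap h (e x))) /\
      (forall h' : Hom X U0,
          (forall x, h' x = alphaN (Nmap h' (e x))) -> forall x, h' x = h x).
Proof.
  intros X HX e.
  exists {| hom := address_map X e; hom_sq := address_map_sq X e HX |}.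
  split; [apply address_map_solution|].
  intros h' Hh' x. apply U0_ext. apply (solution_address X e h' Hh').
Qed.
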